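(* Let $G=(V,E)$ be a finite simple connected graph of order $n\geq 2$, and let $S(G)$ be its splitting graph. Then $\beta_0(S(G)) = n+\beta^*_0(G)$.
   Context: For a finite simple graph $G=(V,E)$, the splitting graph $S(G)$ is obtained from $G$ by adding, for each vertex $v\in V$, a new vertex $v'$, and joining $v'$ to a vertex $u\in V$ if and only if $uv\in E$ (the new vertices are pairwise non-adjacent; the edges of $G$ are kept). $\beta_0(H)$ denotes the independence number of a graph $H$ (maximum size of an independent set). For a graph $G$ of order $n\geq 2$, $\beta_0^*(G):=\max\{|S|-|N(S)| : S \text{ is an independent set of } G\}$, where $N(S)$ is the set of vertices of $G$ adjacent to some vertex of $S$ (the empty set counts as an independent set). *)

From mathcomp Require Import all_boot all_order all_algebra.
Set Implicit Arguments. Unset Strict Implicit. Unset Printing Implicit Defensive.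
Import Order.TTheory GRing.Theory Num.Theory.

Section Graphs.
Variable T : finType.

Definition simple_graph (e : rel T) : Prop := symmetric e /\ irreflexive e.

Definition connected_graph (e : rel T) : Prop := forall x y : T, connect e x y.

Definition independent (e : rel T) (S : {set T}) : bool :=
  [forall x in S, forall y in S, ~~ e x y].

Definition indep_number (e : rel T) : nat :=
  \max_(S : {set T} | independent e S) #|S|.

Definition nbhd (e : rel T) (S : {set T}) : {set T} :=
  [set u | [exists v in S, e v u]].

(* beta_0^*(G) = max { |S| - |N(S)| : S independent }, integer valued.
   The empty set is independent and gives 0, so using 0 as the neutral
   element of the max does not change the value. *)
Definition beta0_star (e : rel T) : int :=
  \big[Num.max/0%R]_(S : {set T} | independent e S) (#|S|%:Z - #|nbhd e S|%:Z)%R.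
End Graphs.

(* Splitting graph S(G): vertices inl v (original) and inr v (copy v').
   Edges of G kept; v' ~ u iff u v is an edge of G; copies pairwise non-adjacent. *)
Definition splitting_rel (T : finType) (e : rel T) : rel (T + T) :=
  fun a b => match a, b with
             | inl u, inl v => e u v
             | inl u, inr v => e u v
             | inr u, inl v => e u v
             | inr _, inr _ => false
             end.

(* An independent set I of S(G) splits into its original vertices A, which
   are independent in G, and its copies, which must avoid N(A); hence
   |I| <= |A| + n - |N(A)| <= n + beta_0^*(G).  Conversely, for A independent
   in G, A together with the copies of V \ N(A) is independent in S(G) and
   has exactly |A| + n - |N(A)| elements. *)
From mathcomp Require Import all_boot all_order all_algebra.
From mathcomp Require Import zify.
Set Implicit Arguments. Unset Strict Implicit. Unset Printing Implicit Defensive.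
Import Order.TTheory GRing.Theory Num.Theory.

Lemma card_sum_preimset (T : finType) (I : {set T + T}) :
  #|I| = #|inl @^-1: I| + #|inr @^-1: I|.
Proof.
by rewrite -!sum1_card big_sumType; congr (_ + _); apply: eq_bigl => x; rewrite inE.
Qed.

Section Independence.
Variables (T : finType) (e : rel T).

Lemma independentP (S : {set T}) :
  reflect {in S &, forall x y, ~~ e x y} (independent e S).
Proof.
apply: (iffP forall_inP) => [indS x y xS yS | indS x xS].
  by move/forall_inP: (indS x xS); apply.
by apply/forall_inP => y yS; apply: indS.
Qed.

Lemma independent0 : independent e set0.
Proof. by apply/independentP => x; rewrite inE. Qed.

Lemma nbhd0 : nbhd e set0 = set0.
Proof.
by apply/setP => x; rewrite !inE; apply/exists_inP => -[v]; rewrite inE.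
Qed.

Lemma leq_indep_number (S : {set T}) :
  independent e S -> #|S| <= indep_number e.
Proof. exact: (@leq_bigmax_cond _ (independent e) (fun S => #|S|)). Qed.

Lemma indep_number_attained : exists2 S, independent e S & #|S| = indep_number e.
Proof.
have indT : 0 < #|[pred S : {set T} | independent e S]|.
  by apply/card_gt0P; exists set0; exact: independent0.
have [S indS maxS] := eq_bigmax_cond (fun S : {set T} => #|S|) indT.
by exists S.
Qed.

Lemma le_beta0_star (S : {set T}) :
  independent e S -> (#|S|%:Z - #|nbhd e S|%:Z <= beta0_star e)%R.
Proof. exact: (@le_bigmax_cond _ _ _ 0%R _ (independent e)). Qed.

End Independence.

Section SplittingGraph.
Variables (T : finType) (e : rel T).

Definition splitting_lift (A : {set T}) : {set T + T} :=
  inl @: A :|: inr @: ~: nbhd e A.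

Lemma card_splitting_lift (A : {set T}) :
  #|splitting_lift A| = #|A| + #|~: nbhd e A|.
Proof.
rewrite card_sum_preimset; congr (_ + _); apply: eq_card => x; rewrite !inE.
- rewrite mem_imset; last exact: inl_inj.
  by case: imsetP => [[y _ /eqP //]|_]; rewrite orbF.
- rewrite mem_imset; last exact: inr_inj.
  by case: imsetP => [[y _ /eqP //]|_]; rewrite !inE.
Qed.

Lemma independent_splitting_lift (A : {set T}) :
  symmetric e -> independent e A -> independent (splitting_rel e) (splitting_lift A).
Proof.
move=> esym /independentP indA; apply/independentP.
have notin_nbhd a b : a \in A -> b \in ~: nbhd e A -> ~~ e a b.
  by move=> aA; rewrite !inE; apply: contra => eab; apply/exists_inP; exists a.
move=> x y /setUP[]/imsetP[a aA ->] /setUP[]/imsetP[b bA ->] //=.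
- exact: indA.
- exact: notin_nbhd.
- by rewrite esym; apply: notin_nbhd.
Qed.

Lemma independent_splitting_inl (I : {set T + T}) :
  independent (splitting_rel e) I -> independent e (inl @^-1: I).
Proof.
move=> /independentP indI; apply/independentP => x y.
by rewrite !inE; apply: indI.
Qed.

Lemma splitting_inr_sub_nbhdC (I : {set T + T}) :
  independent (splitting_rel e) I -> inr @^-1: I \subset ~: nbhd e (inl @^-1: I).
Proof.
move=> /independentP indI; apply/subsetP => b; rewrite !inE => bI.
by apply/exists_inP => -[v]; rewrite inE => vI; apply/negP/(indI _ _ vI bI).
Qed.

Lemma card_splitting_independent_le (I : {set T + T}) :
  independent (splitting_rel e) I -> (#|I|%:Z <= #|T|%:Z + beta0_star e)%R.
Proof.
move=> indI; set A := inl @^-1: I.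
have := le_beta0_star (independent_splitting_inl indI).
have := subset_leq_card (splitting_inr_sub_nbhdC indI).
rewrite [#|I|]card_sum_preimset -/A; have := cardsC (nbhd e A); lia.
Qed.

Lemma splitting_lift_card_le (A : {set T}) :
  symmetric e -> independent e A ->
  (#|T|%:Z + (#|A|%:Z - #|nbhd e A|%:Z) <= indep_number (splitting_rel e))%R.
Proof.
move=> esym indA; have := leq_indep_number (independent_splitting_lift esym indA).
rewrite card_splitting_lift; have := cardsC (nbhd e A); lia.
Qed.

End SplittingGraph.

Theorem theorem1 (T : finType) (e : rel T) :
  simple_graph e -> connected_graph e -> 2 <= #|T| ->
  Posz (indep_number (splitting_rel e)) = (Posz #|T| + beta0_star e)%R.
Proof.
move=> [esym _] _ _; apply/eqP; rewrite eq_le; apply/andP; split.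
- have [I indI <-] := indep_number_attained (splitting_rel e).
  exact: card_splitting_independent_le.
- rewrite -lerBrDl; apply: bigmax_le => [|A indA].
    have := splitting_lift_card_le esym (independent0 e).
    by rewrite cards0 nbhd0 cards0; lia.
  by have := splitting_lift_card_le esym indA; lia.
Qed.
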